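(* Let $R$ be a commutative ring which is free as an abelian group with $\mathbb{Z}$-basis $V=\{v_k\}_{k\in I}$, let $n\ge2$, $p$ a prime and $r\ge1$, and assume $p\ne2$ or $r>1$. Then the $p$-th power map $X\mapsto X^p$ induces a well-defined group isomorphism $$\psi^p_r:\Gamma(SL_n(R),p^r)/\Gamma(SL_n(R),p^{r+1})\longrightarrow\Gamma(SL_n(R),p^{r+1})/\Gamma(SL_n(R),p^{r+2}),$$ and $\psi^p_r(A_{ij,k,r})=A_{ij,k,r+1}$ for all $1\le i,j\le n$ with $i+j<2n$ and $k\in I$.
   Context: $\Gamma(SL_n(R),p^m)=\ker\big(SL_n(R)\to SL_n(R/p^mR)\big)$. For $m\ge1$ the quotient $\Gamma(SL_n(R),p^m)/\Gamma(SL_n(R),p^{m+1})$ is identified (via reduction mod $p^{m+1}$) with the kernel of $SL_n(R/p^{m+1}R)\to SL_n(R/p^mR)$, and in it $A_{ij,k,m}$ denotes the reduction mod $p^{m+1}$ of $1+p^mv_ke_{ij}$ if $i\ne j$ and of $1+p^mv_k(e_{ii}-e_{nn})$ if $i=j$, where $e_{ij}$ is the matrix unit with $1$ in position $(i,j)$. *)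

From HB Require Import structures.
From mathcomp Require Import all_boot all_order all_algebra.
Set Implicit Arguments. Unset Strict Implicit. Unset Printing Implicit Defensive.
Import GRing.Theory.
Local Open Scope ring_scope.

Definition is_Zbasis (R : comPzRingType) (I : eqType) (v : I -> R) : Prop :=
  (forall x : R, exists (s : seq I) (c : I -> int),
      x = \sum_(k <- s) v k *~ c k) /\
  (forall (s : seq I) (c : I -> int), uniq s ->
      \sum_(k <- s) v k *~ c k = 0 -> forall k, k \in s -> c k = 0).

Definition mx_congr (R : comPzRingType) (n : nat) (q m : nat) (X Y : 'M[R]_n) : Prop :=
  forall i j, exists y : R, X i j - Y i j = (q ^ m)%:R * y.

Definition Gamma (R : comPzRingType) (n : nat) (q m : nat) (X : 'M[R]_n) : Prop :=
  \det X = 1 /\ mx_congr q m X 1%:M.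

Definition mxpow (R : comPzRingType) (n : nat) (X : 'M[R]_n) (e : nat) : 'M[R]_n :=
  iter e (mulmx X) 1%:M.

(* The matrix 1 + q^m x e_ij (i <> j), resp. 1 + q^m x (e_ii - e_nn) (i = j);
   indices are 0-based, so e_nn is the entry (n-1, n-1). *)
Definition Amx (R : comPzRingType) (n : nat) (q m : nat) (i j : 'I_n) (x : R)
  : 'M[R]_n :=
  \matrix_(a, b)
    ((a == b)%:R + (q ^ m)%:R * x *
       (if i == j then
          ((a == i) && (b == i))%:R
          - (((a : nat) == n.-1) && ((b : nat) == n.-1))%:R
        else ((a == i) && (b == j))%:R)).

From mathcomp Require Import all_boot all_order all_algebra zify ring.
(* Write [X = 1 + p^r B].  By the binomial theorem [X^p = 1 + p^(r+1) B] modulo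
   [p^(r+2)]: the middle binomial coefficients are divisible by p, and the last
   term [p^(r p) B^p] is harmless because [p <> 2] or [r > 1].  So on the layers
   [Gamma(p^r)/Gamma(p^(r+1))], both identified with [B mod p], the p-th power map
   is the identity; this gives well-definedness, multiplicativity and, R being
   torsion-free, injectivity.  For surjectivity, [Z = 1 + p^(r+1) C] is matched by
   a product Y of transvections with [Y = 1 + p^r (C - tr C e_NN)] modulo [p^(2r)];
   comparing the determinants of [Y^p] and [Z (1 - p^(r+1) tr C e_NN)] shows that
   p divides [tr C], so [Y^p = Z] modulo [p^(r+2)]. *)

Set Implicit Arguments. Unset Strict Implicit. Unset Printing Implicit Defensive.
Import GRing.Theory.
Local Open Scope ring_scope.

Section EqModN.
Variable V : zmodType.
Implicit Types (x y z : V) (m : nat).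

Definition eqmodn m x y := exists w, x - y = w *+ m.

Definition torsion_free := forall m x, (0 < m)%N -> x *+ m = 0 -> x = 0.

Lemma eqmodnP m x y : eqmodn m x y <-> exists w, x = y + w *+ m.
Proof.
by split=> -[w hw]; exists w; [rewrite -hw addrC subrK | rewrite hw addrC addKr].
Qed.

Lemma eqmodn_refl m x : eqmodn m x x.
Proof. by exists 0; rewrite subrr mul0rn. Qed.

Lemma eqmodn_sym m x y : eqmodn m x y -> eqmodn m y x.
Proof. by move=> [w hw]; exists (- w); rewrite mulNrn -hw opprB. Qed.

Lemma eqmodn_trans m y x z : eqmodn m x y -> eqmodn m y z -> eqmodn m x z.
Proof. by move=> [w hw] [w' hw']; exists (w + w'); rewrite mulrnDl -hw -hw' addrA subrK. Qed.

Lemma eqmodnD m x y x' y' :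
  eqmodn m x y -> eqmodn m x' y' -> eqmodn m (x + x') (y + y').
Proof. by move=> [w hw] [w' hw']; exists (w + w'); rewrite mulrnDl -hw -hw' opprD addrACA. Qed.

Lemma eqmodn_addn m x w : eqmodn m (x + w *+ m) x.
Proof. by exists w; rewrite addrC addKr. Qed.

Lemma eqmodnN m x y : eqmodn m x y -> eqmodn m (- x) (- y).
Proof. by move=> [w hw]; exists (- w); rewrite -opprD mulNrn hw. Qed.

Lemma eqmodn_add2l m z x y : eqmodn m (z + x) (z + y) <-> eqmodn m x y.
Proof. by rewrite /eqmodn opprD addrACA subrr add0r. Qed.

Lemma eqmodn_sum0 m (I : Type) (s : seq I) (P : pred I) (F : I -> V) :
  (forall i, P i -> eqmodn m (F i) 0) -> eqmodn m (\sum_(i <- s | P i) F i) 0.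
Proof.
move=> F0; apply: (big_ind (fun y => eqmodn m y 0)) => //; first exact: eqmodn_refl.
by move=> y y' hy hy'; rewrite -[0]addr0; apply: eqmodnD.
Qed.

Lemma eqmodn_dvd m m' x y : (m %| m')%N -> eqmodn m' x y -> eqmodn m x y.
Proof. by move=> /dvdnP[k ->] [w hw]; exists (w *+ k); rewrite hw mulrnA. Qed.

Lemma eqmodn_muln m k x y : eqmodn m x y -> eqmodn (m * k) (x *+ k) (y *+ k).
Proof. by move=> [w hw]; exists w; rewrite -mulrnBl hw -mulrnA. Qed.

Lemma torsion_free_cancel m k x y :
  torsion_free -> (0 < m)%N -> eqmodn (m * k) (x *+ m) (y *+ m) -> eqmodn k x y.
Proof.
move=> tf m_gt0 [w hw]; exists w; apply/eqP; rewrite -subr_eq0; apply/eqP.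
by apply: (tf m) => //; rewrite !mulrnBl hw -!mulrnA mulnC subrr.
Qed.

End EqModN.

Section EqModNRing.
Variable A : pzRingType.
Implicit Types (x y : A) (m : nat).

Lemma eqmodnM m x y x' y' :
  eqmodn m x y -> eqmodn m x' y' -> eqmodn m (x * x') (y * y').
Proof.
move=> [w hw] [w' hw']; exists (w * x' + y * w').
have -> : x * x' - y * y' = (x - y) * x' + y * (x' - y').
  by rewrite mulrBl mulrBr addrA subrK.
by rewrite hw hw' mulrnAl mulrnAr mulrnDl.
Qed.

Lemma eqmodn_big_prod m (I : Type) (s : seq I) (P : pred I) (F G : I -> A) :
  (forall i, P i -> eqmodn m (F i) (G i)) ->
  eqmodn m (\prod_(i <- s | P i) F i) (\prod_(i <- s | P i) G i).
Proof. by apply: big_ind2; [exact: eqmodn_refl | exact: eqmodnM]. Qed.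

Lemma eqmodn_mul_1addn m (b c : A) :
  eqmodn (m * m) ((1 + b *+ m) * (1 + c *+ m)) (1 + (b + c) *+ m).
Proof.
exists (b * c); rewrite mulrDl !mulrDr !mul1r mulr1 mulrnAl mulrnAr -mulrnA mulrnDl.
rewrite addrA (addrAC 1 (c *+ m)) -(addrA 1 (b *+ m)).
by rewrite [_ + b * c *+ _]addrC addrK.
Qed.

Lemma eqmodn_mul_first_order t x x' b b' :
  eqmodn (t * t) x (1 + b *+ t) -> eqmodn (t * t) x' (1 + b' *+ t) ->
  eqmodn (t * t) (x * x') (1 + (b + b') *+ t).
Proof. by move=> hx hx'; apply: eqmodn_trans (eqmodnM hx hx') (eqmodn_mul_1addn _ _ _). Qed.

Lemma eqmodn_prod_first_order t (I : Type) (s : seq I) (P : pred I) (F G : I -> A) :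
  (forall i, P i -> eqmodn (t * t) (F i) (1 + G i *+ t)) ->
  eqmodn (t * t) (\prod_(i <- s | P i) F i) (1 + (\sum_(i <- s | P i) G i) *+ t).
Proof.
apply: (big_ind2 (fun x b => eqmodn (t * t) x (1 + b *+ t))).
  by rewrite mul0rn addr0; exact: eqmodn_refl.
by move=> x b x' b'; exact: eqmodn_mul_first_order.
Qed.

End EqModNRing.

Lemma dvdn_exp_sq p k : (0 < k)%N -> (p ^ k.+1 %| p ^ k * p ^ k)%N.
Proof. by move=> k_gt0; rewrite -expnD dvdn_exp2l // -addn1 leq_add2l. Qed.

Section PthPower.
Variables (A : pzRingType) (p r : nat).
Hypotheses (p_prime : prime p) (r_gt0 : (0 < r)%N)
  (p_odd_or_r_gt1 : ((p != 2) \/ (1 < r))%N).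

Lemma dvdn_bin_expn k : (2 <= k <= p)%N -> (p ^ r.+2 %| 'C(p, k) * p ^ (r * k))%N.
Proof.
move=> /andP[k_ge2 k_lep]; have p_gt1 := prime_gt1 p_prime.
have [k_ltp|k_gep] := ltnP k p.
  have p_dvd_bin : (p %| 'C(p, k))%N by apply: prime_dvd_bin => //; lia.
  by rewrite expnS; apply: dvdn_mul => //; apply: dvdn_exp2l; nia.
have -> : k = p by lia.
rewrite binn mul1n; apply: dvdn_exp2l.
case: p_odd_or_r_gt1 => [p_neq2|]; last by nia.
have : (3 <= p)%N by move: p_neq2 p_gt1; case: (p) => [|[|[|]]].
nia.
Qed.

Lemma exprp_1addn (x : A) :
  eqmodn (p ^ r.+2) ((1 + x *+ p ^ r) ^+ p) (1 + x *+ p ^ r.+1).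
Proof.
rewrite [1 + x *+ p ^ r]addrC exprD1n.
rewrite -(big_mkord xpredT (fun i => (x *+ p ^ r) ^+ i *+ 'C(p, i))).
rewrite big_ltn // big_ltn ?ltnS ?prime_gt0 //.
rewrite expr0 bin0 expr1 bin1 mulr1n -mulrnA -expnSr addrA -[X in eqmodn _ _ X]addr0.
apply/eqmodn_add2l; rewrite big_seq; apply: eqmodn_sum0 => i.
rewrite mem_index_iota => /andP[i_ge2 i_ltp].
apply: (eqmodn_dvd (dvdn_bin_expn (k := i) _)); first by rewrite i_ge2 -ltnS.
by exists (x ^+ i); rewrite subr0 exprMn_n -mulrnA -expnM mulnC.
Qed.

Lemma eqmodn_exprp (x y : A) :
  eqmodn (p ^ r.+1) x y -> eqmodn (p ^ r) y 1 ->
  eqmodn (p ^ r.+2) (x ^+ p) (y ^+ p).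
Proof.
move=> /eqmodnP[e ->] /eqmodnP[b ->].
rewrite [(p ^ r.+1)%N]expnS mulrnA -addrA -mulrnDl.
apply: eqmodn_trans (exprp_1addn _) _; apply: eqmodn_sym.
apply: eqmodn_trans (exprp_1addn _) _.
rewrite mulrnDl -mulrnA -expnS addrA; apply: eqmodn_sym; exact: eqmodn_addn.
Qed.

Lemma eqmodn_exprp_1 (x : A) :
  eqmodn (p ^ r) x 1 -> eqmodn (p ^ r.+1) (x ^+ p) 1.
Proof.
move=> /eqmodnP[b ->]; have := exprp_1addn b.
move=> /(eqmodn_dvd (dvdn_exp2l _ (leqnSn _)))/eqmodn_trans; apply; exact: eqmodn_addn.
Qed.

Lemma eqmodn_exprpM (x y : A) :
  eqmodn (p ^ r) x 1 -> eqmodn (p ^ r) y 1 ->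
  eqmodn (p ^ r.+2) ((x * y) ^+ p) (x ^+ p * y ^+ p).
Proof.
move=> /eqmodnP[b ->] /eqmodnP[c ->].
apply: (eqmodn_trans (y := (1 + (b + c) *+ p ^ r) ^+ p)).
  apply: eqmodn_exprp; last exact: eqmodn_addn.
  by apply: eqmodn_dvd (dvdn_exp_sq _ r_gt0) _; exact: eqmodn_mul_1addn.
apply: eqmodn_trans (exprp_1addn _) _; apply: eqmodn_sym.
apply: eqmodn_trans (eqmodnM (exprp_1addn b) (exprp_1addn c)) _.
by apply: eqmodn_dvd (dvdn_exp_sq _ (ltn0Sn r)) _; exact: eqmodn_mul_1addn.
Qed.

Lemma eqmodn_exprp_inj (x y : A) : torsion_free A ->
  eqmodn (p ^ r) x 1 -> eqmodn (p ^ r) y 1 ->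
  eqmodn (p ^ r.+2) (x ^+ p) (y ^+ p) -> eqmodn (p ^ r.+1) x y.
Proof.
move=> tf /eqmodnP[b ->] /eqmodnP[c ->] hpow.
have : eqmodn (p ^ r.+2) (1 + b *+ p ^ r.+1) (1 + c *+ p ^ r.+1).
  apply: eqmodn_trans (eqmodn_sym (exprp_1addn b)) _.
  exact: eqmodn_trans hpow (exprp_1addn c).
have pr_gt0 : (0 < p ^ r.+1)%N by rewrite expn_gt0 prime_gt0.
move/eqmodn_add2l; rewrite (expnSr p r.+1) => /(torsion_free_cancel tf pr_gt0) bc.
by apply/eqmodn_add2l; rewrite expnS; apply: eqmodn_muln.
Qed.

End PthPower.

Section Matrices.
Variables (R : comPzRingType) (n : nat).
Implicit Types (X Y : 'M[R]_n) (q e m : nat).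

Lemma eqmodn_entry m X Y i j : eqmodn m X Y -> eqmodn m (X i j) (Y i j).
Proof. by move=> [B /matrixP/(_ i j)]; rewrite !mxE mulmxnE; exists (B i j). Qed.

Lemma mx_congrE q e X Y : mx_congr q e X Y <-> eqmodn (q ^ e) X Y.
Proof.
split=> [congrXY | /eqmodn_entry congrXY i j]; last first.
  by have [y hy] := congrXY i j; exists y; rewrite hy mulr_natl.
have entry i j : exists y, X i j - Y i j == y *+ q ^ e.
  by have [y hy] := congrXY i j; exists y; rewrite hy mulr_natl.
exists (\matrix_(i, j) xchoose (entry i j)); apply/matrixP => i j.
by rewrite mulmxnE !mxE; exact/eqP/(xchooseP (entry i j)).
Qed.

Lemma det_eqmodn m X Y : eqmodn m X Y -> eqmodn m (\det X) (\det Y).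
Proof.
move=> congrXY; apply: (big_ind2 (eqmodn m)); [exact: eqmodn_refl | exact: eqmodnD |] => s _.
apply: eqmodnM; first exact: eqmodn_refl.
by apply: eqmodn_big_prod => i _; exact: eqmodn_entry.
Qed.

Lemma det_expr X e : \det (X ^+ e) = \det X ^+ e.
Proof. by elim: e => [|e IH]; rewrite ?det1 // !exprS -IH -det_mulmx. Qed.

Lemma mxpowE X e : mxpow X e = X ^+ e.
Proof. by elim: e => // e IH; rewrite /mxpow iterS -/(mxpow X e) IH exprS. Qed.

Lemma Gamma_eqmodn1 q e X : Gamma q e X -> eqmodn (q ^ e) X 1.
Proof. by case=> _ /mx_congrE. Qed.

Lemma Amx_expansion q (i j : 'I_n) (x : R) :
  exists M : 'M[R]_n, forall e, Amx q e i j x = 1 + M *+ q ^ e.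
Proof.
exists (\matrix_(a, b) (x * (if i == j then ((a == i) && (b == i))%:R
                              - (((a : nat) == n.-1) && ((b : nat) == n.-1))%:R
                            else ((a == i) && (b == j))%:R))).
by move=> e; apply/matrixP => a b; rewrite !mxE mulmxnE mxE -mulrA mulr_natl.
Qed.

Lemma det_prod_eq1 (I : Type) (s : seq I) (P : pred I) (F : I -> 'M[R]_n) :
  (forall i, P i -> \det (F i) = 1) -> \det (\prod_(i <- s | P i) F i) = 1.
Proof.
move=> detF; apply: (big_ind (fun M : 'M[R]_n => \det M = 1)) => //.
  exact: det1.
by move=> M M' detM detM'; rewrite -[M * M']/(M *m M') det_mulmx detM detM' mulr1.
Qed.

Lemma det_1addZ_delta (a : R) (N : 'I_n) : \det (1 + a *: delta_mx N N) = 1 + a.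
Proof.
rewrite det_trig.
  rewrite (bigD1 N) //= big1 ?mulr1 => [|i iN]; rewrite !mxE ?eqxx ?mulr1 //.
  by rewrite (negbTE iN) mulr0 addr0.
apply/forallP => c; apply/forallP => d; apply/implyP => c_lt_d.
rewrite !mxE -val_eqE (ltn_eqF c_lt_d) add0r.
case: (c =P N) => [cN|]; case: (d =P N) => [dN|] //=; rewrite ?mulr0 //.
by move: c_lt_d; rewrite cN dN ltnn.
Qed.

Lemma torsion_free_mx : torsion_free R -> torsion_free 'M[R]_n.
Proof.
move=> tf m X m_gt0 /matrixP Xm0; apply/matrixP => i j.
by rewrite mxE; apply: (tf m) => //; have := Xm0 i j; rewrite mulmxnE !mxE.
Qed.

Lemma trace_decomposition (C : 'M[R]_n) (N : 'I_n) :
  \sum_i \sum_(j | j != i) C i j *: delta_mx i j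
    + \sum_(i | i != N) C i i *: (delta_mx i i - delta_mx N N)
  = C - \tr C *: delta_mx N N.
Proof.
have -> : \sum_(i | i != N) C i i *: (delta_mx i i - delta_mx N N)
    = \sum_i C i i *: delta_mx i i - \tr C *: delta_mx N N.
  rewrite [\sum_i C i i *: _](bigD1 N) //= /mxtrace [\sum_(i < n) C i i](bigD1 N) //= scalerDl.
  rewrite opprD addrACA subrr add0r scaler_suml -sumrB.
  by apply: eq_bigr => i _; rewrite scalerBr.
rewrite addrA; congr (_ - _); rewrite [RHS]matrix_sum_delta -big_split.
by apply: eq_bigr => i _; rewrite [in RHS](bigD1 i) //= addrC.
Qed.

End Matrices.

Section Transvections.
Variables (R : comPzRingType) (n : nat).
Implicit Types (i j a b : 'I_n) (x u : R).

Definition transvection i j x : 'M[R]_n := 1 + x *: delta_mx i j.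

Lemma transvection_entry i j x c d :
  transvection i j x c d = (c == d)%:R + x * ((c == i) && (d == j))%:R.
Proof. by rewrite !mxE. Qed.

Lemma mul_transvection_entry (M : 'M[R]_n) i j x c d :
  (M * transvection i j x) c d = M c d + x * M c i * (d == j)%:R.
Proof.
rewrite /transvection mulrDr mulr1 !mxE; congr (_ + _).
rewrite (bigD1 i) //= big1 ?addr0 => [|k ki]; rewrite !mxE.
  by rewrite eqxx /= mulrA (mulrC x).
by rewrite (negbTE ki) /= !mulr0.
Qed.

Lemma det_transvection i j x : i != j -> \det (transvection i j x) = 1.
Proof.
wlog j_lt_i : i j x / (j < i)%N => [wlog_lt ij|ij].
  have [j_lt_i|i_le_j] := ltnP j i; first exact: wlog_lt.
  rewrite -det_tr /transvection linearD /= trmx1 linearZ /= trmx_delta.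
  apply: wlog_lt; last by rewrite eq_sym.
  by rewrite ltn_neqAle i_le_j andbT; apply: contra ij => /eqP /val_inj ->.
rewrite det_trig.
  apply: big1 => k _; rewrite transvection_entry eqxx.
  by case: (k =P i) => [->|_]; rewrite ?(negbTE ij) mulr0 addr0.
apply/forallP => c; apply/forallP => d; apply/implyP => c_lt_d.
rewrite transvection_entry -val_eqE (ltn_eqF c_lt_d) add0r.
case: (c =P i) => [ci|]; case: (d =P j) => [dj|] //=; rewrite ?mulr0 //.
by move: c_lt_d j_lt_i; rewrite ci dj; lia.
Qed.

Lemma transvection_conj a b u : a != b ->
  transvection b a 1 * transvection a b (- u) * transvection b a (-1) =
  1 + u *: (delta_mx a a - delta_mx a b + delta_mx b a - delta_mx b b).
Proof.
move=> ab; apply/matrixP => c d.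
rewrite !mul_transvection_entry !transvection_entry !mxE eqxx.
have ba : (b == a) = false by rewrite eq_sym; exact: negbTE.
case: (c =P a) => [->|ca]; case: (d =P a) => [->|da];
  rewrite ?eqxx ?(negbTE ab) ?ba /=;
  case: (c =P b) => [cb|cb]; case: (d =P b) => [db|db]; subst;
  rewrite ?eqxx ?(negbTE ab) ?ba /=; try ring.
Qed.

(* A product of transvections equal to [1 + u (e_aa - e_bb)] up to terms in [u^2]:
   the conjugate of [1 - u e_ab] by [1 + e_ba], corrected by two transvections. *)
Definition diag_transvection a b u : 'M[R]_n :=
  transvection b a 1 * transvection a b (- u) * transvection b a (-1)
  * transvection a b u * transvection b a (- u).

Lemma det_diag_transvection a b u : a != b -> \det (diag_transvection a b u) = 1.
Proof.
move=> ab; have ba : b != a by rewrite eq_sym.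
by rewrite /diag_transvection -![_ * _]/(_ *m _) !det_mulmx !det_transvection // !mulr1.
Qed.

Lemma eqmodn_transvection t i j c :
  eqmodn (t * t) (transvection i j (c *+ t)) (1 + (c *: delta_mx i j) *+ t).
Proof. by rewrite /transvection scalerMnl; exact: eqmodn_refl. Qed.

Lemma eqmodn_diag_transvection t a b c : a != b ->
  eqmodn (t * t) (diag_transvection a b (c *+ t))
    (1 + (c *: (delta_mx a a - delta_mx b b)) *+ t).
Proof.
move=> ab; rewrite /diag_transvection transvection_conj //.
have -> : c *: (delta_mx a a - delta_mx b b) =
    c *: (delta_mx a a - delta_mx a b + delta_mx b a - delta_mx b b)
    + c *: delta_mx a b + (- c) *: delta_mx b a.
  by apply/matrixP => x y; rewrite !mxE; ring.
apply: eqmodn_mul_first_order; last by rewrite -mulNrn; exact: eqmodn_transvection.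
apply: eqmodn_mul_first_order; last exact: eqmodn_transvection.
by rewrite scalerMnl; exact: eqmodn_refl.
Qed.

(* Off-diagonal entries of C are produced by transvections, diagonal ones by
   [diag_transvection i N]; the latter account for the trace correction at N. *)
Lemma det1_first_order_lift t (C : 'M[R]_n) (N : 'I_n) :
  exists Y : 'M[R]_n,
    \det Y = 1 /\ eqmodn (t * t) Y (1 + (C - \tr C *: delta_mx N N) *+ t).
Proof.
exists ((\prod_i \prod_(j | j != i) transvection i j (C i j *+ t))
        * \prod_(i | i != N) diag_transvection i N (C i i *+ t)).
split.
  rewrite -[_ * _]/(_ *m _) det_mulmx !det_prod_eq1 ?mulr1 // => i iN.
    exact: det_diag_transvection.
  by apply: det_prod_eq1 => j ji; apply: det_transvection; rewrite eq_sym.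
rewrite -trace_decomposition; apply: eqmodn_mul_first_order.
  apply: eqmodn_prod_first_order => i _; apply: eqmodn_prod_first_order => j _.
  exact: eqmodn_transvection.
by apply: eqmodn_prod_first_order => i iN; exact: eqmodn_diag_transvection.
Qed.

End Transvections.

Section Surjectivity.
Variables (R : comPzRingType) (n p r : nat).
Hypotheses (p_prime : prime p) (r_gt0 : (0 < r)%N)
  (p_odd_or_r_gt1 : ((p != 2) \/ (1 < r))%N).

Lemma exprp_Gamma_surj (N : 'I_n) (Z : 'M[R]_n) : torsion_free R ->
  Gamma p r.+1 Z -> exists X, Gamma p r X /\ eqmodn (p ^ r.+2) (X ^+ p) Z.
Proof.
move=> tf [detZ /mx_congrE/eqmodnP[C defZ]]; rewrite {}defZ in detZ *.
pose s := (p ^ r.+1)%N; pose E := \tr C *: delta_mx N N.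
have [Y [detY congrY]] := det1_first_order_lift (p ^ r) C N.
have Yp : eqmodn (p ^ r.+2) (Y ^+ p) (1 + (C - E) *+ s).
  apply: eqmodn_trans _ (exprp_1addn p_prime r_gt0 p_odd_or_r_gt1 _).
  apply: eqmodn_exprp => //; first exact: eqmodn_dvd (dvdn_exp_sq _ r_gt0) congrY.
  exact: eqmodn_addn.
have ZD : eqmodn (p ^ r.+2) ((1 + C *+ s) * (1 + (- E) *+ s)) (1 + (C - E) *+ s).
  exact: eqmodn_dvd (dvdn_exp_sq _ (ltn0Sn r)) (eqmodn_mul_1addn _ _ _).
have trC : eqmodn p (\tr C) 0.
  have := det_eqmodn (eqmodn_trans Yp (eqmodn_sym ZD)).
  rewrite det_expr detY expr1n -[_ * _]/(_ *m _) det_mulmx detZ mul1r.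
  rewrite /E -scaleNr scalerMnl det_1addZ_delta mulNrn -[X in eqmodn _ X]addr0.
  move/eqmodn_add2l/eqmodnN/eqmodn_sym; rewrite oppr0 opprK expnSr => trCs.
  apply: (torsion_free_cancel (m := s) tf); first by rewrite expn_gt0 prime_gt0.
  by rewrite mul0rn.
have [w trCE] := trC; exists Y; split.
  split=> //; apply/mx_congrE.
  apply: eqmodn_trans (eqmodn_dvd (dvdn_mulr _ (dvdnn _)) congrY) _.
  exact: eqmodn_addn.
apply: eqmodn_trans Yp _; rewrite mulrnDl addrA -[X in eqmodn _ _ X]addr0.
apply: eqmodnD; first exact: eqmodn_refl.
exists (- (w *: delta_mx N N)).
by rewrite /E subr0 !mulNrn expnS mulrnA [w *: _ *+ p]scalerMnl -trCE subr0.
Qed.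

End Surjectivity.

Lemma Zbasis_torsion_free (R : comPzRingType) (I : eqType) (v : I -> R) :
  is_Zbasis v -> torsion_free R.
Proof.
move=> [span indep] m x m_gt0 xm0; have [s [c defx]] := span x.
pose c' k := c k * (count_mem k s)%:Z.
have {}defx : x = \sum_(k <- undup s) v k *~ c' k.
  rewrite defx -big_undup_iterop_count; apply: eq_bigr => k _.
  by rewrite Monoid.iteropE iter_addr_0 /c' mulrzA pmulrn.
have c'm0 : forall k, k \in undup s -> c' k * m%:Z = 0.
  apply: indep (undup_uniq s) _.
  under eq_bigr do rewrite mulrzA.
  by rewrite -mulrz_suml -defx -pmulrn.
rewrite defx big1_seq // => k /andP[_ ks]; move/eqP: (c'm0 k ks).
rewrite mulf_eq0 => /orP[/eqP -> | ]; first by rewrite mulr0z.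
by case: (m) m_gt0.
Qed.

Theorem proposition4p5 (R : comPzRingType) (I : eqType) (v : I -> R)
  (n p r : nat) :
  is_Zbasis v -> (2 <= n)%N -> prime p -> (1 <= r)%N -> (p != 2%N \/ (1 < r)%N) ->
  (forall X : 'M[R]_n, Gamma p r X -> Gamma p r.+1 (mxpow X p)) /\
  (forall X Y : 'M[R]_n, Gamma p r X -> Gamma p r Y ->
     mx_congr p r.+1 X Y -> mx_congr p r.+2 (mxpow X p) (mxpow Y p)) /\
  (forall X Y : 'M[R]_n, Gamma p r X -> Gamma p r Y ->
     mx_congr p r.+2 (mxpow (X *m Y) p) (mxpow X p *m mxpow Y p)) /\
  (forall X Y : 'M[R]_n, Gamma p r X -> Gamma p r Y ->
     mx_congr p r.+2 (mxpow X p) (mxpow Y p) -> mx_congr p r.+1 X Y) /\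
  (forall Z : 'M[R]_n, Gamma p r.+1 Z ->
     exists X : 'M[R]_n, Gamma p r X /\ mx_congr p r.+2 (mxpow X p) Z) /\
  (forall (i j : 'I_n) (k : I), (i + j < 2 * n - 2)%N ->
     forall X : 'M[R]_n, Gamma p r X -> mx_congr p r.+1 X (Amx p r i j (v k)) ->
       mx_congr p r.+2 (mxpow X p) (Amx p r.+1 i j (v k))).
Proof.
move=> Zbasis n_ge2 p_prime r_gt0 hp.
have tfR := Zbasis_torsion_free Zbasis; have tf := torsion_free_mx (n := n) tfR.
split=> [X gX|].
  split; first by rewrite mxpowE det_expr gX.1 expr1n.
  by apply/mx_congrE; rewrite mxpowE; exact: eqmodn_exprp_1 (Gamma_eqmodn1 gX).
split=> [X Y _ gY /mx_congrE XY|].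
  apply/mx_congrE; rewrite !mxpowE; apply: (eqmodn_exprp p_prime r_gt0 hp XY).
  exact: Gamma_eqmodn1 gY.
split=> [X Y gX gY|].
  apply/mx_congrE; rewrite !mxpowE.
  exact: eqmodn_exprpM (Gamma_eqmodn1 gX) (Gamma_eqmodn1 gY).
split=> [X Y gX gY /mx_congrE|].
  rewrite !mxpowE => /(eqmodn_exprp_inj p_prime r_gt0 hp tf).
  by move=> /(_ (Gamma_eqmodn1 gX) (Gamma_eqmodn1 gY)) /mx_congrE.
split=> [Z gZ|].
  pose N : 'I_n := Ordinal (ltnW n_ge2).
  have [X [gX XpZ]] := exprp_Gamma_surj p_prime r_gt0 hp N tfR gZ.
  by exists X; split=> //; apply/mx_congrE; rewrite mxpowE.
move=> i j k _ X _ /mx_congrE XA; apply/mx_congrE; rewrite mxpowE.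
have [M AE] := Amx_expansion p i j (v k); rewrite !AE in XA *.
apply: eqmodn_trans (eqmodn_exprp p_prime r_gt0 hp XA (eqmodn_addn _ _ _)) _.
exact: exprp_1addn.
Qed.
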